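(* Let $\mathcal{X}$ be a finite set of $n$ agents, $\Gamma$ a merit distribution with finite expected merits, and $w_1\ge\dots\ge w_n$ position weights. Then all ranking distributions that are $1$-fair with respect to $\Gamma$ have the same expected utility $U(\pi,\Gamma)$ for the principal.
   Context: A ranking of $\mathcal{X}$ is a bijection $\sigma:\{1,\dots,n\}\to\mathcal{X}$ ($\sigma(k)$ is the agent in position $k$); a ranking distribution $\pi$ is a probability distribution over rankings, with marginals $P_\pi(x,k)=\sum_{\sigma:\sigma(k)=x}\pi(\sigma)$. A merit distribution $\Gamma$ is a probability distribution over $v\in\mathbb{R}^{\mathcal{X}}$ with pairwise distinct entries on its support. $\mathrm{Top}_k(x;v)$ is the event $|\{x': v_{x'}>v_x\}|<k$. For $\rho\in[0,1]$, $\pi$ is $\rho$-fair if $\sum_{k'=1}^{k}P_\pi(x,k')\ge\rho\cdot\Pr_{v\sim\Gamma}[\mathrm{Top}_k(x;v)]$ for all $x,k$. Utility: $U(\sigma,v)=\sum_{k=1}^n w_k v_{\sigma(k)}$, $U(\pi,\Gamma)=\mathbb{E}_{\sigma\sim\pi,v\sim\Gamma}[U(\sigma,v)]$ with $\sigma,v$ independent. *)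

From HB Require Import structures.
From mathcomp Require Import all_boot all_order all_algebra.
From mathcomp Require Import all_classical all_reals all_analysis.
Set Implicit Arguments. Unset Strict Implicit. Unset Printing Implicit Defensive.
Import Order.TTheory GRing.Theory Num.Theory.
Local Open Scope ring_scope.

(* A ranking of the finite agent set X (with n = #|X|): a bijection from
   positions {0,...,n-1} (position k of the paper = index k-1) to X.
   Since #|'I_n| = #|X|, injectivity is equivalent to bijectivity. *)
Definition ranking (X : finType) := {s : {ffun 'I_#|X| -> X} | injectiveb s}.

Definition ranking_distr (R : realType) (X : finType) (pi : ranking X -> R) :=
  (forall s, 0 <= pi s) /\ \sum_(s : ranking X) pi s = 1.

Definition marg (R : realType) (X : finType) (pi : ranking X -> R)
  (x : X) (k : 'I_#|X|) : R :=
  \sum_(s : ranking X | val s k == x) pi s.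

(* Top_k(x; v) with k = (index i).+1 : fewer than k agents have strictly
   larger merit than x. *)
Definition Top (R : realType) (X : finType) (k : nat) (x : X) (v : X -> R) : bool :=
  (#|[set x' | (v x < v x')%R]| < k)%N.

(* rho-fairness of pi w.r.t. the merit distribution, given as the law of a
   random merit vector v : T -> (X -> R) under the probability P. *)
Definition rho_fair (R : realType) (d : measure_display) (T : measurableType d)
  (P : probability T R) (X : finType) (v : T -> X -> R)
  (rho : R) (pi : ranking X -> R) : Prop :=
  forall (x : X) (k : 'I_#|X|),
    (rho%:E * P [set t | Top k.+1 x (v t)]%classic <=
       (\sum_(k' : 'I_#|X| | (k' <= k)%N) marg pi x k')%:E)%E.

(* Expected utility U(pi,Gamma) = E_{sigma ~ pi, v ~ Gamma}[sum_k w_k v_{sigma(k)}],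
   sigma and v independent (pi is discrete, so the product expectation is
   the pi-weighted sum of the Gamma-expectations). *)
Definition utility (R : realType) (d : measure_display) (T : measurableType d)
  (P : probability T R) (X : finType) (v : T -> X -> R)
  (w : 'I_#|X| -> R) (pi : ranking X -> R) : \bar R :=
  (\sum_(s : ranking X)
     (pi s)%:E * \int[P]_t (\sum_(k : 'I_#|X|) w k * v t (val s k))%:E)%E.

From HB Require Import structures.
From mathcomp Require Import all_boot all_order all_algebra.
From mathcomp Require Import all_classical all_reals all_analysis.
From mathcomp Require Import zify measurable_realfun.
Import Order.TTheory GRing.Theory Num.Theory.
Set Implicit Arguments. Unset Strict Implicit.
Local Open Scope ring_scope.

(* 1-fairness bounds every cumulative marginal F(x, k) = sum_{k' <= k} P(x, k')
   from below by p(x, k) = Pr[Top_(k+1)(x)].  Summing over the agents, the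
   F(., k) add up to k + 1 (each position holds exactly one agent), while the
   p(., k) add up to at least k + 1 (at least k + 1 agents are always in the
   top k + 1).  Hence F(x, k) = p(x, k) for all x and k, so the marginals of a
   1-fair ranking distribution are determined by the merit distribution, and
   the expected utility depends on the ranking distribution only through its
   marginals. *)

Lemma sum_squeeze (R : numDomainType) (I : finType) (F G : I -> R) :
  (forall i, F i <= G i) -> \sum_i G i <= \sum_i F i -> F =1 G.
Proof.
move=> FleG sumGleF i; apply/eqP; rewrite eq_sym -subr_eq0; apply/eqP.
have GF_ge0 j : xpredT j -> 0 <= G j - F j by rewrite subr_ge0.
apply: (psumr_eq0P GF_ge0) => //; apply/eqP.
by rewrite eq_le sumrB subr_le0 subr_ge0 sumGleF ler_sum.
Qed.

Lemma eq_from_prefix_sums (V : zmodType) (n : nat) (f g : 'I_n -> V) :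
  (forall k : 'I_n,
     \sum_(j < n | (j <= k)%N) f j = \sum_(j < n | (j <= k)%N) g j) ->
  f =1 g.
Proof.
move=> prefix_eq.
suff below m (k : 'I_n) : (k < m)%N -> f k = g k by move=> k; exact: (below k.+1).
elim: m k => [//|m IHm] k lt_k_m1.
have := prefix_eq k; rewrite (bigD1 k) // [in RHS](bigD1 k) //=.
have -> : \sum_(j < n | (j <= k)%N && (j != k)) f j =
          \sum_(j < n | (j <= k)%N && (j != k)) g j.
  apply: eq_bigr => j /andP[le_jk ne_jk]; apply: IHm.
  have : (j < k)%N by rewrite ltn_neqAle ne_jk.
  lia.
exact: addIr.
Qed.

Section Marginals.
Variables (R : realType) (X : finType) (pi : ranking X -> R).

Lemma sum_rank_position (c : X -> R) (k : 'I_#|X|) :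
  \sum_(s : ranking X) pi s * c (val s k) = \sum_(x : X) marg pi x k * c x.
Proof.
rewrite (partition_big (fun s : ranking X => val s k) xpredT) //=.
apply: eq_bigr => x _; rewrite /marg big_distrl /=.
by apply: eq_bigr => s /eqP ->.
Qed.

Lemma sum_marg (k : 'I_#|X|) : \sum_(x : X) marg pi x k = \sum_s pi s.
Proof.
have := sum_rank_position (fun=> 1) k.
by under eq_bigr do rewrite mulr1; under [RHS]eq_bigr do rewrite mulr1.
Qed.

Lemma sum_cumulative_marg (k : 'I_#|X|) : ranking_distr pi ->
  \sum_(x : X) \sum_(j < #|X| | (j <= k)%N) marg pi x j = k.+1%:R.
Proof.
case=> _ pi_sum1; rewrite exchange_big /=.
under eq_bigr do rewrite sum_marg pi_sum1.
rewrite -(big_ord_widen_cond _ xpredT (fun=> 1) (ltn_ord k)) /=.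
by rewrite sumr_const card_ord.
Qed.

End Marginals.

Lemma card_Top_ge (R : realType) (X : finType) (f : X -> R) (k : nat) :
  (k < #|X|)%N -> (k.+1 <= #|[set x | Top k.+1 x f]|)%N.
Proof.
move=> lt_k_X; rewrite leqNgt; apply/negP => small.
set S := [set x | Top k.+1 x f] in small.
have [y0 y0_out] : exists y0, y0 \notin S.
  have : (0 < #|~: S|)%N by move: (cardsC S); lia.
  by case/card_gt0P => y; rewrite inE; exists y.
(* the best agent outside S only has agents of S above it, hence lies in S *)
case: (@arg_maxP _ _ _ y0 (fun x => x \notin S) f y0_out) => y y_out y_max.
have above_sub : [set x | f y < f x] \subset S.
  apply/fintype.subsetP => x; rewrite inE => lt_yx; apply/negPn/negP => x_out.
  by have := y_max x x_out; rewrite /= leNgt lt_yx.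
have : y \in S.
  by rewrite inE /Top (leq_ltn_trans (subset_leq_card above_sub)) // ltnS -ltnS.
by rewrite (negPf y_out).
Qed.

Local Open Scope classical_set_scope.

Section MeritDistribution.
Variables (R : realType) (d : measure_display) (T : measurableType d).
Variables (P : probability T R) (X : finType) (v : T -> X -> R).
Hypothesis v_meas : forall x : X, measurable_fun setT (fun t => v t x).

Lemma measurable_Top (k : nat) (x : X) : measurable [set t | Top k x (v t)].
Proof.
have -> : [set t | Top k x (v t)] =
    \bigcup_(S in [set S : {set X} | (#|S| < k)%N])
      \bigcap_(x' in [set: X]) [set t | (v t x < v t x') = (x' \in S)].
  apply/seteqP; split => t /=.
    by move=> top_t; exists [set x' | v t x < v t x']%SET => //= x' _; rewrite inE.
  case=> S /= small_S above_S; rewrite /Top.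
  suff -> : [set x' | v t x < v t x']%SET = S by [].
  by apply/setP => x'; rewrite inE (above_S x' I).
apply: fin_bigcup_measurable; first exact: finite_finset.
move=> S _; apply: fin_bigcap_measurable; first exact: finite_finset.
move=> x' _.
have mS : measurable [set x' \in S] by [].
have := measurable_fun_ltr (v_meas x) (v_meas x') measurableT mS.
by rewrite setTI.
Qed.

Lemma sum_prob_Top_ge (k : 'I_#|X|) :
  (k.+1%:R%:E <= \sum_(x : X) P [set t | Top k.+1 x (v t)])%E.
Proof.
have Top_indic x : P [set t | Top k.+1 x (v t)] =
    (\int[P]_t (\1_[set t | Top k.+1 x (v t)] t)%:E)%E.
  by rewrite integral_indic ?setIT //; exact: measurable_Top.
have indic_meas x :
    measurable_fun setT (fun t => (\1_[set t | Top k.+1 x (v t)] t)%:E).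
  by apply/measurable_EFinP; apply: measurable_indic; exact: measurable_Top.
under eq_bigr do rewrite Top_indic.
rewrite -ge0_integral_sum //.
have -> : (k.+1%:R%:E = \int[P]_t (cst k.+1%:R%:E) t)%E.
  by rewrite integral_cst // -[LHS]mule1 -(probability_setT P).
apply: ge0_le_integral => //.
- by move=> t _; rewrite lee_fin.
- exact: emeasurable_sum.
move=> t _; rewrite sumEFin lee_fin /=.
rewrite (bigID (fun x => Top k.+1 x (v t))) /= [X in _ + X]big1; last first.
  by move=> x not_top; rewrite indicE memNset //=; apply/negP.
rewrite addr0 (eq_bigr (fun=> 1)); last by move=> x top; rewrite indicE mem_set.
by rewrite sumr_const ler_nat; have := card_Top_ge (v t) (ltn_ord k); rewrite cardsE.
Qed.

Lemma fair1_cumulative_margE (pi : ranking X -> R) :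
  ranking_distr pi -> rho_fair P v 1 pi ->
  forall (x : X) (k : 'I_#|X|),
    \sum_(j < #|X| | (j <= k)%N) marg pi x j =
      fine (P [set t | Top k.+1 x (v t)]).
Proof.
move=> pi_distr pi_fair x k.
have P_Top_fin y : P [set t | Top k.+1 y (v t)] =
    (fine (P [set t | Top k.+1 y (v t)]))%:E.
  by rewrite fineK // fin_num_measure //; exact: measurable_Top.
apply/esym; move: x; apply: sum_squeeze => [x|].
  by have := pi_fair x k; rewrite mul1e P_Top_fin lee_fin.
rewrite sum_cumulative_marg // -lee_fin -sumEFin.
by under eq_bigr do rewrite -P_Top_fin; exact: sum_prob_Top_ge.
Qed.

Hypothesis v_int : forall x : X, P.-integrable setT (fun t => (v t x)%:E).

Definition mean_merit (x : X) : R := fine (\int[P]_t (v t x)%:E)%E.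

Lemma integral_ranking_utility (w : 'I_#|X| -> R) (s : ranking X) :
  (\int[P]_t (\sum_(k < #|X|) w k * v t (val s k))%:E =
    (\sum_(k < #|X|) w k * mean_merit (val s k))%:E)%E.
Proof.
under eq_integral => t _ do rewrite -sumEFin.
rewrite integral_sum //; last first.
  by move=> k; under eq_fun do rewrite EFinM; exact: integrableZl.
rewrite -sumEFin; apply: eq_bigr => k _.
under eq_integral => t _ do rewrite EFinM.
rewrite integralZl // EFinM /mean_merit fineK //; exact: integrable_fin_num.
Qed.

Lemma utility_margE (w : 'I_#|X| -> R) (pi : ranking X -> R) :
  utility P v w pi =
    (\sum_(k < #|X|) w k * \sum_(x : X) marg pi x k * mean_merit x)%:E.
Proof.
rewrite /utility; under eq_bigr do rewrite integral_ranking_utility -EFinM.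
rewrite sumEFin; congr _%:E.
under eq_bigr do rewrite big_distrr /=.
rewrite exchange_big /=; apply: eq_bigr => k _.
rewrite -sum_rank_position big_distrr /=.
by apply: eq_bigr => s _; rewrite mulrCA.
Qed.

End MeritDistribution.

Theorem lemma2 (R : realType) (d : measure_display) (T : measurableType d)
  (P : probability T R) (X : finType) (v : T -> X -> R)
  (v_meas : forall x : X, measurable_fun setT (fun t => v t x))
  (v_int : forall x : X, P.-integrable setT (fun t => (v t x)%:E))
  (v_distinct : {ae P, forall t, injective (v t)})
  (w : 'I_#|X| -> R)
  (w_noninc : forall i j : 'I_#|X|, (i <= j)%N -> w j <= w i)
  (pi1 pi2 : ranking X -> R) :
  ranking_distr pi1 -> ranking_distr pi2 ->
  rho_fair P v 1 pi1 -> rho_fair P v 1 pi2 ->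
  utility P v w pi1 = utility P v w pi2.
Proof.
move=> distr1 distr2 fair1 fair2.
have same_marg x : marg pi1 x =1 marg pi2 x.
  apply: eq_from_prefix_sums => k.
  by rewrite (fair1_cumulative_margE v_meas distr1 fair1)
             (fair1_cumulative_margE v_meas distr2 fair2).
rewrite !utility_margE //; congr _%:E; apply: eq_bigr => k _.
by under eq_bigr do rewrite same_marg.
Qed.
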